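(* Consider the delay differential system \[ \begin{aligned} \dot T(t)&= s-dT(t)+aT(t)\Big(1-\frac{T(t)+I(t)}{T_{\max}}\Big)-\frac{bT(t)V(t)}{1+\alpha V(t)},\\ \dot I(t)&= \frac{bT(t-\tau)V(t-\tau)}{1+\alpha V(t-\tau)}+aI(t)\Big(1-\frac{T(t)+I(t)}{T_{\max}}\Big)-\mu I(t),\\ \dot V(t)&= pI(t)-cV(t), \end{aligned} \] with positive constants $s,d,a,T_{\max},b,\alpha,\mu,p,c$ and $\tau\ge0$. Let \[ T_0=\frac{T_{\max}}{2a}\Big(a-d+\sqrt{(a-d)^2+\tfrac{4as}{T_{\max}}}\Big),\qquad R_0=\frac{1}{\mu}\Big[\frac{bpT_0}{c}+a\Big(1-\frac{T_0}{T_{\max}}\Big)\Big]. \] If $R_0>1$ and the unique infected equilibrium $E_2=(T_2,I_2,V_2)$ (with $T_2,I_2,V_2>0$) satisfies $a\le d+\frac{a}{T_{\max}}(T_2+I_2)$, then $E_2$ is globally asymptotically stable (with respect to solutions with positive initial data) for any $\tau\ge0$.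
   Context: When $R_0>1$ the system has a unique equilibrium with all components positive, called the infected equilibrium. *)

From Stdlib Require Import Reals.
From Coquelicot Require Import Coquelicot.
Open Scope R_scope.

Definition incid (b alpha T V : R) : R := b * T * V / (1 + alpha * V).

Definition logist (Tmax T I : R) : R := 1 - (T + I) / Tmax.

Definition T0 (s d a Tmax : R) : R :=
  Tmax / (2 * a) * (a - d + sqrt ((a - d) ^ 2 + 4 * a * s / Tmax)).

Definition basic_R0 (s d a Tmax b mu p c : R) : R :=
  / mu * (b * p * T0 s d a Tmax / c + a * (1 - T0 s d a Tmax / Tmax)).

Definition is_equilibrium (s d a Tmax b alpha mu p c : R) (Te Ie Ve : R) : Prop :=
  s - d * Te + a * Te * logist Tmax Te Ie - incid b alpha Te Ve = 0 /\
  incid b alpha Te Ve + a * Ie * logist Tmax Te Ie - mu * Ie = 0 /\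
  p * Ie - c * Ve = 0.

(* A global solution on [-tau, +oo): the functions are continuous, their
   restriction to [-tau,0] is the initial history, and for every t > 0 they are
   differentiable with derivatives given by the delay system. (Values before
   -tau are irrelevant; continuity everywhere is harmless.) *)
Definition is_solution (s d a Tmax b alpha mu p c tau : R) (T I V : R -> R) : Prop :=
  (forall t, continuous T t) /\ (forall t, continuous I t) /\ (forall t, continuous V t) /\
  forall t, 0 < t ->
    is_derive T t (s - d * T t + a * T t * logist Tmax (T t) (I t)
                   - incid b alpha (T t) (V t)) /\
    is_derive I t (incid b alpha (T (t - tau)) (V (t - tau))
                   + a * I t * logist Tmax (T t) (I t) - mu * I t) /\
    is_derive V t (p * I t - c * V t).

Definition positive_initial (tau : R) (T I V : R -> R) : Prop :=
  forall th, -tau <= th <= 0 -> 0 < T th /\ 0 < I th /\ 0 < V th.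

(* Global asymptotic stability of (Te, Ie, Ve) w.r.t. solutions with positive
   initial data: Lyapunov stability (sup-norm on the history segment) plus
   global attractivity. *)
Definition GAS (s d a Tmax b alpha mu p c tau : R) (Te Ie Ve : R) : Prop :=
  (forall eps, 0 < eps -> exists delta, 0 < delta /\
     forall T I V : R -> R,
       is_solution s d a Tmax b alpha mu p c tau T I V ->
       positive_initial tau T I V ->
       (forall th, -tau <= th <= 0 ->
          Rabs (T th - Te) < delta /\ Rabs (I th - Ie) < delta /\ Rabs (V th - Ve) < delta) ->
       forall t, 0 <= t ->
          Rabs (T t - Te) < eps /\ Rabs (I t - Ie) < eps /\ Rabs (V t - Ve) < eps) /\
  (forall T I V : R -> R,
     is_solution s d a Tmax b alpha mu p c tau T I V ->
     positive_initial tau T I V ->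
     is_lim T p_infty Te /\ is_lim I p_infty Ie /\ is_lim V p_infty Ve).

From Stdlib Require Import Reals Lra Psatz Classical ZArith Lia.
From Coquelicot Require Import Coquelicot.
Open Scope R_scope.

(* With [g r = r - 1 - ln r], [F T V = b T V / (1 + alpha V)] and [F2 = F T2 V2], the functional
     U t = T2 g (T/T2) + I2 g (I/I2) + F2/(p I2) V2 g (V/V2) + F2 \int_{t-tau}^t g (F (T, V) / F2)
   satisfies [U' <= - Phi], where [Phi >= 0] vanishes only at E2: the equilibrium relations make
   the logarithms telescope, and the hypothesis on E2 is the sign condition on the remaining
   quadratic term in [T - T2]. Solutions stay positive by a continuation argument. Since [U]
   does not increase and each term of it controls one coordinate, initial data [rho]-close to E2
   (for which [U 0 = O (rho^2)]) stay close, and [U] bounds the solution and hence its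
   derivatives; a Barbalat-type argument then forces [Phi], and with it the distance to E2, to 0. *)

(** * The Volterra function *)

Lemma ln_lt_sub1 x : 0 < x -> x <> 1 -> ln x < x - 1.
Proof.
  intros Hx Hx1. rewrite <- (ln_exp (x - 1)).
  apply ln_increasing; [exact Hx|].
  pose proof (exp_ineq1 (x - 1) ltac:(lra)). lra.
Qed.

Lemma ln_le_sub1 x : 0 < x -> ln x <= x - 1.
Proof.
  intros Hx. destruct (Req_dec x 1) as [->|Hx1].
  - rewrite ln_1. lra.
  - pose proof (ln_lt_sub1 x Hx Hx1). lra.
Qed.

Definition volterra (r : R) : R := r - 1 - ln r.

Lemma volterra_ge0 r : 0 < r -> 0 <= volterra r.
Proof. intros Hr. pose proof (ln_le_sub1 r Hr). unfold volterra. lra. Qed.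

Lemma volterra_gt0 r : 0 < r -> r <> 1 -> 0 < volterra r.
Proof. intros Hr Hr1. pose proof (ln_lt_sub1 r Hr Hr1). unfold volterra. lra. Qed.

Lemma volterra_le r : 0 < r -> volterra r <= (r - 1) ^ 2 / r.
Proof.
  intros Hr. pose proof (ln_le_sub1 (/ r) (Rinv_0_lt_compat _ Hr)) as H.
  rewrite ln_Rinv in H by exact Hr.
  replace ((r - 1) ^ 2 / r) with (r - 2 + / r) by (field; lra).
  unfold volterra. lra.
Qed.

Lemma volterra_near_1 rho r : 0 < rho <= 1 / 2 ->
  (1 - rho) ^ 2 <= r <= (1 + rho) ^ 2 -> volterra r <= 36 * rho ^ 2.
Proof.
  intros Hrho Hr.
  assert (Hr4 : 1 / 4 <= r) by nra.
  assert (-3 * rho <= r - 1 <= 3 * rho) by nra.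
  assert (Hsq : (r - 1) ^ 2 <= 9 * rho ^ 2) by nra.
  apply (Rle_trans _ _ _ (volterra_le r ltac:(lra))).
  apply Rmult_le_reg_r with r; [lra|].
  unfold Rdiv. rewrite Rmult_assoc, Rinv_l by lra. nra.
Qed.

Lemma le_of_volterra_le r K : 0 < r -> volterra r <= K -> r <= 2 * (K + 1).
Proof.
  intros Hr HK.
  assert (Hln : ln r <= r / 2).
  { replace (ln r) with (ln (r / 2) + ln 2)
      by (rewrite <- ln_mult by lra; f_equal; field).
    pose proof (ln_le_sub1 (r / 2) ltac:(lra)). pose proof (ln_le_sub1 2 ltac:(lra)). lra. }
  unfold volterra in HK. lra.
Qed.

(* Hence [volterra] decreases on (0, 1] and increases on [1, oo). *)
Lemma volterra_sub_ge r1 r2 : 0 < r1 -> 0 < r2 ->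
  (r2 - r1) * (1 - / r1) <= volterra r2 - volterra r1.
Proof.
  intros H1 H2.
  assert (Hln : ln r2 - ln r1 <= r2 / r1 - 1).
  { replace (ln r2) with (ln (r2 / r1) + ln r1)
      by (rewrite <- ln_mult by (try apply Rdiv_lt_0_compat; lra); f_equal; field; lra).
    pose proof (ln_le_sub1 (r2 / r1) ltac:(apply Rdiv_lt_0_compat; lra)). lra. }
  replace ((r2 - r1) * (1 - / r1)) with (r2 - r1 - (r2 / r1 - 1)) by (field; lra).
  unfold volterra. lra.
Qed.

Lemma volterra_away_from_1 rho : 0 < rho < 1 ->
  exists m, 0 < m /\ forall r, 0 < r -> rho <= Rabs (r - 1) -> m <= volterra r.
Proof.
  intros Hrho. exists (Rmin (volterra (1 - rho)) (volterra (1 + rho))). split.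
  - apply Rmin_glb_lt; apply volterra_gt0; lra.
  - intros r Hr Hdist. destruct (Rle_lt_dec r 1).
    + rewrite Rabs_left1 in Hdist by lra.
      pose proof (volterra_sub_ge (1 - rho) r ltac:(lra) Hr).
      assert (/ (1 - rho) >= 1).
      { replace 1 with (/ 1) at 2 by apply Rinv_1.
        apply Rle_ge, Rinv_le_contravar; lra. }
      pose proof (Rmin_l (volterra (1 - rho)) (volterra (1 + rho))). nra.
    + rewrite Rabs_right in Hdist by lra.
      pose proof (volterra_sub_ge (1 + rho) r ltac:(lra) Hr).
      assert (/ (1 + rho) <= 1).
      { replace 1 with (/ 1) at 2 by apply Rinv_1. apply Rinv_le_contravar; lra. }
      pose proof (Rmin_r (volterra (1 - rho)) (volterra (1 + rho))). nra.
Qed.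

Lemma le_of_scaled_volterra_le W Xs X B : 0 < W -> 0 < Xs -> 0 < X ->
  W * volterra (X / Xs) <= B -> X <= 2 * (B / W + 1) * Xs.
Proof.
  intros HW HXs HX HB.
  assert (volterra (X / Xs) <= B / W).
  { apply Rmult_le_reg_l with W; [exact HW|]. replace (W * (B / W)) with B by (field; lra). exact HB. }
  pose proof (le_of_volterra_le (X / Xs) (B / W) ltac:(apply Rdiv_lt_0_compat; lra) H).
  replace X with (X / Xs * Xs) by (field; lra). apply Rmult_le_compat_r; lra.
Qed.

Lemma close_of_scaled_volterra_small W Xs eps : 0 < W -> 0 < Xs -> 0 < eps ->
  exists eta, 0 < eta /\ forall X, 0 < X -> W * volterra (X / Xs) < eta -> Rabs (X - Xs) < eps.
Proof.
  intros HW HXs Heps.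
  pose proof (Rmin_l (eps / Xs) (1 / 2)). pose proof (Rmin_r (eps / Xs) (1 / 2)).
  set (rho := Rmin (eps / Xs) (1 / 2)) in *.
  assert (Hrho : 0 < rho < 1).
  { split; [|lra]. apply Rmin_glb_lt; [apply Rdiv_lt_0_compat|]; lra. }
  destruct (volterra_away_from_1 rho Hrho) as [m [Hm Hfar]].
  exists (W * m). split; [nra|]. intros X HX Hsmall.
  apply Rnot_le_lt. intros Hle.
  enough (m <= volterra (X / Xs)) by nra.
  apply Hfar; [apply Rdiv_lt_0_compat; lra|].
  apply Rle_trans with (eps / Xs); [lra|].
  replace (X / Xs - 1) with ((X - Xs) / Xs) by (field; lra).
  rewrite Rabs_div, (Rabs_right Xs) by lra.
  unfold Rdiv. apply Rmult_le_compat_r; [left; apply Rinv_0_lt_compat|]; lra.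
Qed.

Lemma rel_err_le X Xs r : 0 < Xs -> Rabs (X - Xs) <= r * Xs -> Rabs (X / Xs - 1) <= r.
Proof.
  intros HXs H. replace (X / Xs - 1) with ((X - Xs) / Xs) by (field; lra).
  rewrite Rabs_div, (Rabs_right Xs) by lra.
  apply Rmult_le_reg_r with Xs; [exact HXs|]. unfold Rdiv. rewrite Rmult_assoc, Rinv_l by lra. lra.
Qed.

Lemma exists_small_sqr_mul Q eta : 0 <= Q -> 0 < eta ->
  exists rho, 0 < rho <= 1 / 2 /\ rho ^ 2 * Q < eta.
Proof.
  intros HQ Heta.
  pose proof (Rmin_l (1 / 2) (eta / (Q + 1))). pose proof (Rmin_r (1 / 2) (eta / (Q + 1))).
  assert (0 < eta / (Q + 1)) by (apply Rdiv_lt_0_compat; lra).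
  set (rho := Rmin (1 / 2) (eta / (Q + 1))) in *.
  assert (Hpos : 0 < rho) by (apply Rmin_glb_lt; lra).
  exists rho. split; [lra|].
  assert (eta / (Q + 1) * Q < eta).
  { apply Rmult_lt_reg_r with (Q + 1); [lra|].
    replace (eta / (Q + 1) * Q * (Q + 1)) with (eta * Q) by (field; lra). nra. }
  assert (rho ^ 2 * Q <= rho * Q) by (apply Rmult_le_compat_r; nra).
  assert (rho * Q <= eta / (Q + 1) * Q) by (apply Rmult_le_compat_r; lra).
  lra.
Qed.

Lemma sub_le_of_derive_le (f df : R -> R) (a b m : R) : a <= b ->
  (forall x, a <= x <= b -> continuous f x) ->
  (forall x, a < x < b -> is_derive f x (df x)) ->
  (forall x, a < x < b -> df x <= m) ->
  f b - f a <= m * (b - a).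
Proof.
  intros Hab Hc Hd Hm.
  (* The derivative is only controlled in the interior, while [MVT_gen] may return an endpoint. *)
  set (df' := fun x => if Rlt_dec a x then if Rlt_dec x b then df x else m else m).
  assert (Hdf' : forall x, a < x < b -> df' x = df x).
  { intros x Hx. unfold df'. destruct (Rlt_dec a x); [|lra]. destruct (Rlt_dec x b); [easy|lra]. }
  destruct (MVT_gen f a b df') as [x [Hx ->]];
    rewrite ?Rmin_left, ?Rmax_right in * by lra.
  - intros x Hx. rewrite Hdf' by exact Hx. now apply Hd.
  - intros x Hx. apply continuity_pt_filterlim, Hc, Hx.
  - apply Rmult_le_compat_r; [lra|]. unfold df'.
    destruct (Rlt_dec a x); [|lra]. destruct (Rlt_dec x b); [|lra]. apply Hm; lra.
Qed.

Lemma sub_ge_of_derive_ge (f df : R -> R) (a b m : R) : a <= b ->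
  (forall x, a <= x <= b -> continuous f x) ->
  (forall x, a < x < b -> is_derive f x (df x)) ->
  (forall x, a < x < b -> m <= df x) ->
  m * (b - a) <= f b - f a.
Proof.
  intros Hab Hc Hd Hm.
  enough (- f b - - f a <= - m * (b - a)) by lra.
  apply (sub_le_of_derive_le (fun x => - f x) (fun x => - df x)); [exact Hab | | |].
  - intros x Hx. apply (continuous_opp f), Hc, Hx.
  - intros x Hx. apply (is_derive_opp f), Hd, Hx.
  - intros x Hx. specialize (Hm x Hx). lra.
Qed.

Lemma lipschitz_of_derive_bound (f df : R -> R) (t0 K : R) :
  (forall x, t0 <= x -> continuous f x) ->
  (forall x, t0 < x -> is_derive f x (df x)) ->
  (forall x, t0 <= x -> Rabs (df x) <= K) ->
  forall u v, t0 <= u -> t0 <= v -> Rabs (f v - f u) <= K * Rabs (v - u).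
Proof.
  intros Hc Hd Hb u v Hu Hv.
  assert (Hmin : t0 <= Rmin u v) by (apply Rmin_glb; lra).
  destruct (MVT_gen f u v df) as [x [Hx ->]].
  - intros x Hx. apply Hd. lra.
  - intros x Hx. apply continuity_pt_filterlim, Hc. lra.
  - rewrite Rabs_mult. apply Rmult_le_compat_r; [apply Rabs_pos|]. apply Hb. lra.
Qed.

(* Gronwall: [f x * exp (K x)] is nondecreasing. *)
Lemma pos_of_derive_ge_linear (f df : R -> R) (K a b : R) : a <= b ->
  (forall x, a <= x <= b -> continuous f x) ->
  (forall x, a < x < b -> is_derive f x (df x)) ->
  (forall x, a < x < b -> - K * f x <= df x) ->
  0 < f a -> 0 < f b.
Proof.
  intros Hab Hc Hd Hm Ha.
  assert (Hmono : 0 * (b - a) <= f b * exp (K * b) - f a * exp (K * a)).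
  { apply (sub_ge_of_derive_ge (fun x => f x * exp (K * x))
            (fun x => df x * exp (K * x) + f x * (K * exp (K * x)))); [exact Hab | | |].
    - intros x Hx. apply (continuous_mult f (fun x => exp (K * x))); [now apply Hc|].
      apply (ex_derive_continuous (fun x => exp (K * x))). auto_derive; auto.
    - intros x Hx. apply (is_derive_mult f (fun x => exp (K * x))); [now apply Hd| |].
      + auto_derive; [easy|ring].
      + intros; apply Rmult_comm.
    - intros x Hx. specialize (Hm x Hx). pose proof (exp_pos (K * x)). nra. }
  pose proof (exp_pos (K * a)). pose proof (exp_pos (K * b)).
  assert (0 < f a * exp (K * a)) by nra. nra.
Qed.

Lemma locally_pos_of_continuous (f : R -> R) x : continuous f x -> 0 < f x ->
  locally x (fun y => 0 < f y).
Proof.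
  intros Hc Hp. apply Hc. exists (mkposreal _ Hp). intros z Hz.
  change (Rabs (z - f x) < f x) in Hz. apply Rabs_def2 in Hz. lra.
Qed.

Lemma continuous_Rplus (f g : R -> R) x : continuous f x -> continuous g x ->
  continuous (fun y => f y + g y) x.
Proof. intros; now apply (continuous_plus f g). Qed.

Lemma continuous_Rmult (f g : R -> R) x : continuous f x -> continuous g x ->
  continuous (fun y => f y * g y) x.
Proof. intros; now apply (continuous_mult f g). Qed.

Lemma continuous_Rmax_l c x : continuous (fun y => Rmax c y) x.
Proof.
  apply (continuous_ext (fun y => (c + y + Rabs (y - c)) / 2)).
  - intros y. unfold Rmax. destruct (Rle_dec c y).
    + rewrite Rabs_right by lra. lra.
    + rewrite Rabs_left by lra. lra.
  - apply (continuous_Rmult (fun y => c + y + Rabs (y - c)) (fun _ => / 2));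
      [|apply continuous_const].
    apply (continuous_Rplus (fun y => c + y) (fun y => Rabs (y - c))).
    + apply (continuous_Rplus (fun _ => c) (fun y => y));
        [apply continuous_const|apply continuous_id].
    + apply (continuous_Rabs_comp (fun y => y - c)).
      apply (continuous_Rplus (fun y => y) (fun _ => - c));
        [apply continuous_id|apply continuous_const].
Qed.

(* The supremum of the [t] such that [P] holds on [[t0, t)] would violate the step hypothesis. *)
Lemma real_induction (P : R -> Prop) (t0 : R) :
  (forall t, t0 <= t -> (forall y, t0 <= y < t -> P y) ->
     exists h, 0 < h /\ forall y, t <= y < t + h -> P y) ->
  forall t, t0 <= t -> P t.
Proof.
  intros Hstep t1 Ht1. apply NNPP. intros Hbad.
  set (E := fun x => t0 <= x /\ forall y, t0 <= y < x -> P y).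
  assert (Hb : bound E).
  { exists t1. intros x [Hx HP]. apply Rnot_lt_le. intros Hlt. apply Hbad, HP. lra. }
  assert (He : exists x, E x) by (exists t0; split; [lra|intros y Hy; lra]).
  destruct (completeness E Hb He) as [ts [Hub Hlub]].
  assert (Hts : t0 <= ts) by (apply Hub; split; [lra|intros y Hy; lra]).
  assert (Hbelow : forall y, t0 <= y < ts -> P y).
  { intros y Hy. apply NNPP. intros HPy.
    enough (ts <= y) by lra. apply Hlub. intros x [Hx HP].
    apply Rnot_lt_le. intros Hlt. apply HPy, HP. lra. }
  destruct (Hstep ts Hts Hbelow) as [h [Hh HP]].
  enough (E (ts + h)) by (pose proof (Hub _ H); lra).
  split; [lra|]. intros y Hy. destruct (Rlt_le_dec y ts); [apply Hbelow|apply HP]; lra.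
Qed.

Lemma nonneg_no_uniform_descent (U : R -> R) (t0 c : R) : 0 < c ->
  (forall t, t0 <= t -> 0 <= U t) ->
  (forall t, t0 <= t -> exists t', t0 <= t' /\ U t' <= U t - c) -> False.
Proof.
  intros Hc Hpos Hdesc.
  assert (Hiter : forall n : nat, exists t, t0 <= t /\ U t <= U t0 - INR n * c).
  { induction n as [|n [t [Ht HUt]]].
    - exists t0. simpl. lra.
    - destruct (Hdesc t Ht) as [t' [Ht' HUt']]. exists t'. rewrite S_INR. lra. }
  assert (HU0 : 0 <= U t0) by (apply Hpos; lra).
  destruct (archimed (U t0 / c)) as [Hup _].
  assert (Hpos_up : (0 < up (U t0 / c))%Z).
  { apply lt_IZR. assert (0 <= U t0 / c) by (apply Rdiv_le_0_compat; lra). lra. }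
  destruct (Hiter (Z.to_nat (up (U t0 / c)))) as [t [Ht HUt]].
  rewrite INR_IZR_INZ, Z2Nat.id in HUt by lia.
  assert (U t0 < IZR (up (U t0 / c)) * c).
  { replace (U t0) with (U t0 / c * c) at 1 by (field; lra). apply Rmult_lt_compat_r; lra. }
  pose proof (Hpos t Ht). lra.
Qed.

(* Barbalat-type argument: if [X] stayed [e]-away from [Xs] at arbitrarily late times, then by the
   Lipschitz bound it would do so on intervals of a fixed length [h], and each such interval lowers
   the nonnegative [U] by the same amount. *)
Lemma is_lim_of_lyapunov (U X : R -> R) (Xs t0 K : R) :
  0 < K ->
  (forall t, t0 <= t -> 0 <= U t) ->
  (forall t1 t2, t0 <= t1 <= t2 -> U t2 <= U t1) ->
  (forall u v, t0 <= u -> t0 <= v -> Rabs (X v - X u) <= K * Rabs (v - u)) ->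
  (forall e, 0 < e -> exists m, 0 < m /\ forall t1 t2, t0 <= t1 <= t2 ->
      (forall x, t1 < x < t2 -> e <= Rabs (X x - Xs)) -> U t2 <= U t1 - m * (t2 - t1)) ->
  is_lim X p_infty Xs.
Proof.
  intros HK Hpos Hmono Hlip Hdrop. apply is_lim_spec. intros [e He].
  apply NNPP. intros Hn.
  assert (Hbad : forall N, exists t, N <= t /\ e <= Rabs (X t - Xs)).
  { intros N. apply NNPP. intros HN. apply Hn. exists N. intros t Ht.
    apply Rnot_le_lt. intros Hle. apply HN. exists t. split; [lra|exact Hle]. }
  destruct (Hdrop (e / 2) ltac:(lra)) as [m [Hm Hdr]].
  set (h := e / (2 * K)).
  assert (Hh : 0 < h) by (unfold h; apply Rdiv_lt_0_compat; lra).
  apply (nonneg_no_uniform_descent U t0 (m * h)); [nra | exact Hpos |].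
  intros t1 Ht1. destruct (Hbad t1) as [t [Ht Hfar]].
  exists (t + h). split; [lra|].
  assert (U (t + h) <= U t - m * (t + h - t)).
  { apply Hdr; [lra|]. intros x Hx.
    pose proof (Hlip t x ltac:(lra) ltac:(lra)) as Hl.
    rewrite (Rabs_right (x - t)) in Hl by lra.
    assert (K * (x - t) <= K * h) by (apply Rmult_le_compat_l; lra).
    replace (K * h) with (e / 2) in * by (unfold h; field; lra).
    pose proof (Rabs_triang_inv (X t - Xs) (X t - X x)) as Htr.
    replace (X t - Xs - (X t - X x)) with (X x - Xs) in Htr by ring.
    rewrite Rabs_minus_sym in Hl. lra. }
  pose proof (Hmono t1 t ltac:(lra)). lra.
Qed.

(** * The incidence and the Lyapunov inequality *)

Lemma incid_pos b alpha X Z : 0 < b -> 0 < alpha -> 0 < X -> 0 < Z -> 0 < incid b alpha X Z.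
Proof.
  intros. unfold incid. apply Rdiv_lt_0_compat; [|nra].
  apply Rmult_lt_0_compat; [apply Rmult_lt_0_compat|]; lra.
Qed.

Lemma incid_le b alpha X Z : 0 < b -> 0 < alpha -> 0 <= X -> 0 <= Z ->
  incid b alpha X Z <= b * X / alpha.
Proof.
  intros. unfold incid.
  apply Rmult_le_reg_r with (1 + alpha * Z); [nra|].
  unfold Rdiv. rewrite Rmult_assoc, Rinv_l by nra.
  replace (b * X * / alpha * (1 + alpha * Z)) with (b * X / alpha + b * X * Z) by (field; lra).
  assert (0 <= b * X / alpha) by (apply Rdiv_le_0_compat; nra). lra.
Qed.

Lemma incid_ratio_bounds b alpha Te Ve X Z rho : 0 < b -> 0 < alpha -> 0 < Te -> 0 < Ve ->
  0 < rho < 1 -> Rabs (X / Te - 1) <= rho -> Rabs (Z / Ve - 1) <= rho ->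
  (1 - rho) ^ 2 <= incid b alpha X Z / incid b alpha Te Ve <= (1 + rho) ^ 2.
Proof.
  intros hb hal hT hV hr HX HZ.
  apply Rabs_le_between in HX. apply Rabs_le_between in HZ.
  set (x := X / Te) in *. set (z := Z / Ve) in *.
  assert (HXe : X = x * Te) by (unfold x; field; lra).
  assert (HZe : Z = z * Ve) by (unfold z; field; lra).
  clearbody x z. subst X Z.
  assert (0 < alpha * (z * Ve)) by (apply Rmult_lt_0_compat; nra).
  assert (0 < alpha * Ve) by nra.
  set (q := z * (1 + alpha * Ve) / (1 + alpha * (z * Ve))).
  assert (Hq : incid b alpha (x * Te) (z * Ve) / incid b alpha Te Ve = x * q).
  { assert (0 < b * Te * Ve) by (apply Rmult_lt_0_compat; [apply Rmult_lt_0_compat|]; lra).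
    unfold q, incid. field. repeat split; lra. }
  (* [q] lies between [1] and [z]. *)
  assert (Hqb : 1 - rho <= q <= 1 + rho).
  { unfold q. split;
      (apply Rmult_le_reg_r with (1 + alpha * (z * Ve)); [lra|];
       unfold Rdiv; rewrite Rmult_assoc, Rinv_l by lra;
       destruct (Rle_lt_dec 1 z); nra). }
  rewrite Hq. split; nra.
Qed.

Lemma logist_term_bound a Tmax M X Y Z : 0 <= a -> 0 < Tmax ->
  0 <= X <= M -> 0 <= Y <= M -> 0 <= Z <= M ->
  Rabs (a * Z * logist Tmax X Y) <= a * (1 + 2 * M / Tmax) * M.
Proof.
  intros Ha HT HX HY HZ.
  assert (HL : Rabs (logist Tmax X Y) <= 1 + 2 * M / Tmax).
  { unfold logist. apply Rabs_le.
    assert (0 <= (X + Y) / Tmax <= 2 * M / Tmax).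
    { split; [apply Rdiv_le_0_compat; lra|].
      unfold Rdiv. apply Rmult_le_compat_r; [left; apply Rinv_0_lt_compat|]; lra. }
    lra. }
  rewrite Rabs_mult, (Rabs_right (a * Z)) by (apply Rle_ge, Rmult_le_pos; lra).
  replace (a * (1 + 2 * M / Tmax) * M) with (a * M * (1 + 2 * M / Tmax)) by ring.
  apply Rmult_le_compat; [apply Rmult_le_pos; lra | apply Rabs_pos | | exact HL].
  apply Rmult_le_compat_l; lra.
Qed.

Definition dissipation (a Tmax b alpha Te Ie Ve X Y Z : R) : R :=
  a * (X - Te + Y - Ie) ^ 2 / Tmax + incid b alpha Te Ve * volterra (Te / X)
  + incid b alpha Te Ve * alpha * (Z - Ve) ^ 2 / (Ve * (1 + alpha * Z) * (1 + alpha * Ve)).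

Lemma dissipation_parts_nonneg a Tmax b alpha Te Ie Ve X Y Z :
  0 < a -> 0 < Tmax -> 0 < b -> 0 < alpha -> 0 < Te -> 0 < Ve -> 0 < X -> 0 < Z ->
  0 <= a * (X - Te + Y - Ie) ^ 2 / Tmax /\
  0 <= incid b alpha Te Ve * volterra (Te / X) /\
  0 <= incid b alpha Te Ve * alpha * (Z - Ve) ^ 2 / (Ve * (1 + alpha * Z) * (1 + alpha * Ve)).
Proof.
  intros. pose proof (incid_pos b alpha Te Ve ltac:(lra) ltac:(lra) ltac:(lra) ltac:(lra)).
  split; [|split].
  - apply Rdiv_le_0_compat; [|lra]. apply Rmult_le_pos; [lra|apply pow2_ge_0].
  - apply Rmult_le_pos; [lra|]. apply volterra_ge0, Rdiv_lt_0_compat; lra.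
  - apply Rdiv_le_0_compat; [apply Rmult_le_pos; [nra|apply pow2_ge_0]|].
    apply Rmult_lt_0_compat; [apply Rmult_lt_0_compat|]; nra.
Qed.

Lemma lyapunov_derivative_identity s d a Tmax b alpha mu p c Te Ie Ve X Y Z Fd :
  0 < Tmax -> 0 < b -> 0 < alpha -> 0 < p ->
  0 < Te -> 0 < Ie -> 0 < Ve -> 0 < X -> 0 < Y -> 0 < Z ->
  is_equilibrium s d a Tmax b alpha mu p c Te Ie Ve ->
  let Fe := incid b alpha Te Ve in
  let F := incid b alpha X Z in
  (s - d * X + a * X * logist Tmax X Y - F) * (1 - Te / X)
  + (Fd + a * Y * logist Tmax X Y - mu * Y) * (1 - Ie / Y)
  + Fe / (p * Ie) * ((p * Y - c * Z) * (1 - Ve / Z))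
  + Fe * (F / Fe - Fd / Fe)
  + Fe * (Fd / Fe / (Y / Ie) + / ((1 + alpha * Ve) / (1 + alpha * Z)) + Y / Ie / (Z / Ve) - 3)
  + a * (X - Te + Y - Ie) ^ 2 / Tmax + Fe * (Te / X - 1)
  + Fe * alpha * (Z - Ve) ^ 2 / (Ve * (1 + alpha * Z) * (1 + alpha * Ve))
  = - (d - a * logist Tmax Te Ie) * (X - Te) ^ 2 / X.
Proof.
  intros hTm hb hal hp hTe hIe hVe hX hY hZ [Es [Emu Ec]] Fe F.
  assert (HFe : 0 < Fe) by (apply incid_pos; auto).
  assert (Hs : s = d * Te - a * Te * logist Tmax Te Ie + Fe) by (unfold Fe; lra).
  assert (Hmu : mu = (Fe + a * Ie * logist Tmax Te Ie) / Ie).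
  { replace (Fe + a * Ie * logist Tmax Te Ie) with (mu * Ie) by (unfold Fe; lra). field; lra. }
  assert (Hc : c = p * Ie / Ve).
  { replace (p * Ie) with (c * Ve) by lra. field; lra. }
  rewrite Hs, Hmu, Hc. unfold logist, F, Fe, incid. field. repeat split; nra.
Qed.

(* The logarithms of the Volterra terms telescope, because
   [Fd / Fe = (F / Fe) (Te / X) (w / y) (1 / h) (y / z)]; what is left is [Fe] times three terms
   [ln u - (u - 1) <= 0] and [- (d - a (1 - (Te + Ie) / Tmax)) (X - Te)^2 / X], which is [<= 0]
   exactly by the hypothesis on the equilibrium. *)
Lemma lyapunov_derivative_le s d a Tmax b alpha mu p c Te Ie Ve X Y Z Xd Zd :
  0 < a -> 0 < Tmax -> 0 < b -> 0 < alpha -> 0 < p ->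
  0 < Te -> 0 < Ie -> 0 < Ve -> 0 < X -> 0 < Y -> 0 < Z -> 0 < Xd -> 0 < Zd ->
  is_equilibrium s d a Tmax b alpha mu p c Te Ie Ve ->
  a <= d + a / Tmax * (Te + Ie) ->
  let Fe := incid b alpha Te Ve in
  (s - d * X + a * X * logist Tmax X Y - incid b alpha X Z) * (1 - Te / X)
  + (incid b alpha Xd Zd + a * Y * logist Tmax X Y - mu * Y) * (1 - Ie / Y)
  + Fe / (p * Ie) * ((p * Y - c * Z) * (1 - Ve / Z))
  + Fe * (volterra (incid b alpha X Z / Fe) - volterra (incid b alpha Xd Zd / Fe))
  <= - dissipation a Tmax b alpha Te Ie Ve X Y Z.
Proof.
  intros ha hTm hb hal hp hTe hIe hVe hX hY hZ hXd hZd Heq Hcond Fe.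
  pose proof (lyapunov_derivative_identity s d a Tmax b alpha mu p c Te Ie Ve X Y Z
                (incid b alpha Xd Zd) hTm hb hal hp hTe hIe hVe hX hY hZ Heq) as Hid.
  cbv zeta in Hid. fold Fe in Hid.
  assert (HFe : 0 < Fe) by (apply incid_pos; auto).
  set (F := incid b alpha X Z) in *. set (Fd := incid b alpha Xd Zd) in *.
  assert (HF : 0 < F) by (apply incid_pos; auto).
  assert (HFd : 0 < Fd) by (apply incid_pos; auto).
  set (y := Y / Ie) in *. set (z := Z / Ve) in *.
  set (h := (1 + alpha * Ve) / (1 + alpha * Z)) in *. set (w := Fd / Fe) in *.
  assert (Hy : 0 < y) by (apply Rdiv_lt_0_compat; lra).
  assert (Hz : 0 < z) by (apply Rdiv_lt_0_compat; lra).
  assert (Hh : 0 < h) by (apply Rdiv_lt_0_compat; nra).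
  assert (Hw : 0 < w) by (apply Rdiv_lt_0_compat; lra).
  assert (Hlog : ln w = ln (F / Fe) + ln (Te / X) + ln (w / y) + ln (/ h) + ln (y / z)).
  { assert (w = (F / Fe) * (Te / X) * (w / y) * (/ h) * (y / z)).
    { unfold w, y, z, h, F, Fe, incid. field. repeat split; nra. }
    assert (Hmul : forall u v, 0 < u -> 0 < v -> 0 < u * v) by (intros; now apply Rmult_lt_0_compat).
    assert (0 < F / Fe) by (apply Rdiv_lt_0_compat; lra).
    assert (0 < Te / X) by (apply Rdiv_lt_0_compat; lra).
    assert (0 < w / y) by (apply Rdiv_lt_0_compat; lra).
    assert (0 < / h) by (apply Rinv_0_lt_compat; lra).
    assert (0 < y / z) by (apply Rdiv_lt_0_compat; lra).
    rewrite H at 1. rewrite !ln_mult; try lra; repeat (first [assumption | apply Hmul]). }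
  assert (0 <= (d - a * logist Tmax Te Ie) * (X - Te) ^ 2 / X).
  { apply Rdiv_le_0_compat; [|lra]. apply Rmult_le_pos; [|apply pow2_ge_0].
    unfold logist. replace (a * (1 - (Te + Ie) / Tmax)) with (a - a / Tmax * (Te + Ie))
      by (field; lra). lra. }
  pose proof (ln_le_sub1 (w / y) ltac:(apply Rdiv_lt_0_compat; lra)).
  pose proof (ln_le_sub1 (/ h) ltac:(apply Rinv_0_lt_compat; lra)).
  pose proof (ln_le_sub1 (y / z) ltac:(apply Rdiv_lt_0_compat; lra)).
  assert (Fe * ln (w / y) <= Fe * (w / y - 1)) by (apply Rmult_le_compat_l; lra).
  assert (Fe * ln (/ h) <= Fe * (/ h - 1)) by (apply Rmult_le_compat_l; lra).
  assert (Fe * ln (y / z) <= Fe * (y / z - 1)) by (apply Rmult_le_compat_l; lra).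
  unfold dissipation, volterra. fold Fe F Fd w. rewrite Hlog. lra.
Qed.

Lemma is_derive_volterra_scaled (f : R -> R) t l K : is_derive f t l -> 0 < f t -> 0 < K ->
  is_derive (fun t => K * volterra (f t / K)) t (l * (1 - K / f t)).
Proof.
  intros Hd Hp HK. unfold volterra.
  assert (Hex : ex_derive f t) by (exists l; exact Hd).
  auto_derive.
  - repeat split; first [exact Hex | apply Rdiv_lt_0_compat; assumption].
  - replace (Derive (fun x => f x) t) with l by (symmetry; now apply is_derive_unique).
    field. split; lra.
Qed.

Lemma continuous_volterra_div (f : R -> R) t K : continuous f t -> 0 < f t -> 0 < K ->
  continuous (fun t => volterra (f t / K)) t.
Proof.
  intros Hc Hp HK. apply (continuous_comp f (fun u => volterra (u / K))); [exact Hc|].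
  apply (ex_derive_continuous (fun u => volterra (u / K))).
  unfold volterra. auto_derive. now apply Rdiv_lt_0_compat.
Qed.

Lemma continuous_volterra_scaled (f : R -> R) t K : continuous f t -> 0 < f t -> 0 < K ->
  continuous (fun t => K * volterra (f t / K)) t.
Proof.
  intros. apply (continuous_Rmult (fun _ => K)); [apply continuous_const|].
  now apply continuous_volterra_div.
Qed.

Lemma continuous_incid b alpha (X Z : R -> R) t : continuous X t -> continuous Z t ->
  1 + alpha * Z t <> 0 -> continuous (fun y => incid b alpha (X y) (Z y)) t.
Proof.
  intros HX HZ Hn. unfold incid, Rdiv.
  apply (continuous_Rmult (fun y => b * X y * Z y) (fun y => / (1 + alpha * Z y))).
  - apply (continuous_Rmult (fun y => b * X y) Z); [|exact HZ].
    apply (continuous_Rmult (fun _ => b) X); [apply continuous_const|exact HX].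
  - apply (continuous_Rinv_comp (fun y => 1 + alpha * Z y)); [|exact Hn].
    apply (continuous_Rplus (fun _ => 1) (fun y => alpha * Z y)); [apply continuous_const|].
    apply (continuous_Rmult (fun _ => alpha) Z); [apply continuous_const|exact HZ].
Qed.

(** * Positivity of solutions *)

Section Positivity.

Variables s d a Tmax b alpha mu p c tau : R.
Hypotheses (hs : 0 < s) (ha : 0 < a) (hTmax : 0 < Tmax) (hb : 0 < b) (halpha : 0 < alpha)
  (hp : 0 < p) (htau : 0 <= tau).
Variables T I V : R -> R.
Hypothesis Hsol : is_solution s d a Tmax b alpha mu p c tau T I V.
Hypothesis Hinit : positive_initial tau T I V.

(* On [[t/2, t]] each equation has the form [X' >= - K X] as long as the history is positive. *)
Lemma solution_pos_at t : 0 < t ->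
  (forall y, -tau <= y < t -> 0 < T y /\ 0 < I y /\ 0 < V y) ->
  0 < T t /\ 0 < I t /\ 0 < V t.
Proof.
  intros Ht Hbefore. destruct Hsol as [HcT [HcI [HcV Hder]]].
  set (t1 := t / 2).
  assert (HcTI : forall x, t1 <= x <= t -> continuity_pt (fun x => T x + I x) x).
  { intros x _. apply continuity_pt_filterlim, (continuous_Rplus T I); auto. }
  destruct (continuity_ab_maj _ t1 t ltac:(unfold t1; lra) HcTI) as [xM [HM _]].
  set (M := Rabs (T xM + I xM)).
  assert (HMb : forall x, t1 <= x <= t -> T x + I x <= M).
  { intros x Hx. pose proof (HM x Hx). pose proof (Rle_abs (T xM + I xM)). unfold M. lra. }
  assert (Hlog : forall x, t1 < x < t -> forall X, 0 <= X ->
            - (a * M / Tmax) * X <= a * X * logist Tmax (T x) (I x)).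
  { intros x Hx X HX. specialize (HMb x ltac:(lra)). unfold logist.
    assert ((T x + I x) / Tmax <= M / Tmax)
      by (apply Rmult_le_compat_r; [left; apply Rinv_0_lt_compat|]; lra).
    replace (- (a * M / Tmax) * X) with (- (a * X * (M / Tmax))) by (field; lra).
    assert (0 <= a * X) by nra. nra. }
  destruct (Hbefore t1 ltac:(unfold t1; lra)) as [PT [PI PV]].
  split; [|split].
  - eapply (pos_of_derive_ge_linear T _ (d + a * M / Tmax + b / alpha) t1 t);
      [unfold t1; lra | intros; apply HcT | intros x Hx; apply Hder; unfold t1 in Hx; lra | | exact PT].
    intros x Hx. destruct (Hbefore x ltac:(unfold t1 in Hx; lra)) as [A1 [A2 A3]].
    pose proof (incid_le b alpha (T x) (V x) hb halpha ltac:(lra) ltac:(lra)).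
    pose proof (Hlog x Hx (T x) ltac:(lra)).
    replace (b * T x / alpha) with (b / alpha * T x) in * by (field; lra). lra.
  - eapply (pos_of_derive_ge_linear I _ (a * M / Tmax + mu) t1 t);
      [unfold t1; lra | intros; apply HcI | intros x Hx; apply Hder; unfold t1 in Hx; lra | | exact PI].
    intros x Hx. destruct (Hbefore x ltac:(unfold t1 in Hx; lra)) as [A1 [A2 A3]].
    destruct (Hbefore (x - tau) ltac:(unfold t1 in Hx; lra)) as [B1 [B2 B3]].
    pose proof (incid_pos b alpha (T (x - tau)) (V (x - tau)) hb halpha B1 B3).
    pose proof (Hlog x Hx (I x) ltac:(lra)). lra.
  - eapply (pos_of_derive_ge_linear V _ c t1 t);
      [unfold t1; lra | intros; apply HcV | intros x Hx; apply Hder; unfold t1 in Hx; lra | | exact PV].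
    intros x Hx. destruct (Hbefore x ltac:(unfold t1 in Hx; lra)) as [A1 [A2 A3]]. nra.
Qed.

Lemma solution_pos t : -tau <= t -> 0 < T t /\ 0 < I t /\ 0 < V t.
Proof.
  revert t. apply real_induction. intros t Ht Hbefore.
  assert (Hnow : 0 < T t /\ 0 < I t /\ 0 < V t).
  { destruct (Rle_lt_dec t 0); [apply Hinit; lra | now apply solution_pos_at]. }
  destruct Hnow as [PT [PI PV]]. destruct Hsol as [HcT [HcI [HcV _]]].
  destruct (filter_and _ _ (locally_pos_of_continuous T t (HcT t) PT)
             (filter_and _ _ (locally_pos_of_continuous I t (HcI t) PI)
                (locally_pos_of_continuous V t (HcV t) PV))) as [h Hh].
  exists h. split; [apply cond_pos|]. intros y Hy. apply Hh.
  change (Rabs (y - t) < h). rewrite Rabs_right; lra.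
Qed.

End Positivity.

(** * The Lyapunov functional *)

Section Lyapunov.

Variables s d a Tmax b alpha mu p c tau : R.
Hypotheses (hs : 0 < s) (hd : 0 < d) (ha : 0 < a) (hTmax : 0 < Tmax) (hb : 0 < b)
  (halpha : 0 < alpha) (hmu : 0 < mu) (hp : 0 < p) (hc : 0 < c) (htau : 0 <= tau).
Variables T2 I2 V2 : R.
Hypotheses (hT2 : 0 < T2) (hI2 : 0 < I2) (hV2 : 0 < V2)
  (heq : is_equilibrium s d a Tmax b alpha mu p c T2 I2 V2)
  (hcond : a <= d + a / Tmax * (T2 + I2)).

Definition F2 : R := incid b alpha T2 V2.
Definition weightV : R := F2 / (p * I2).
Definition lyapunov_const : R := 36 * (T2 + I2 + weightV * V2 + F2 * tau).

Lemma F2_pos : 0 < F2.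
Proof. now apply incid_pos. Qed.

Lemma weightV_pos : 0 < weightV.
Proof. apply Rdiv_lt_0_compat; [exact F2_pos | nra]. Qed.

Section Solution.

Variables T I V : R -> R.
Hypothesis Hsol : is_solution s d a Tmax b alpha mu p c tau T I V.
Hypothesis Hinit : positive_initial tau T I V.

Lemma state_pos t : -tau <= t -> 0 < T t /\ 0 < I t /\ 0 < V t.
Proof. now apply (solution_pos s d a Tmax b alpha mu p c tau). Qed.

Definition dT t := s - d * T t + a * T t * logist Tmax (T t) (I t) - incid b alpha (T t) (V t).
Definition dI t :=
  incid b alpha (T (t - tau)) (V (t - tau)) + a * I t * logist Tmax (T t) (I t) - mu * I t.
Definition dV t := p * I t - c * V t.

Lemma state_continuous t : continuous T t /\ continuous I t /\ continuous V t.
Proof. destruct Hsol as [HT [HI [HV _]]]. auto. Qed.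

Lemma state_derive t : 0 < t -> is_derive T t (dT t) /\ is_derive I t (dI t) /\ is_derive V t (dV t).
Proof. destruct Hsol as [_ [_ [_ Hd]]]. exact (Hd t). Qed.

Definition G t := volterra (incid b alpha (T t) (V t) / F2).
(* [G] only makes sense from [-tau] on; freezing it there makes the integrand continuous on all of R. *)
Definition G_ext t := G (Rmax (- tau) t).
Definition J t := RInt G_ext (t - tau) t.

Lemma G_continuous x : -tau <= x -> continuous G x.
Proof.
  intros Hx. destruct (state_pos x Hx) as [PT [PI PV]]. destruct (state_continuous x) as [HT [_ HV]].
  apply (continuous_volterra_div (fun y => incid b alpha (T y) (V y))); [| now apply incid_pos | exact F2_pos].
  apply continuous_incid; [exact HT | exact HV | nra].
Qed.

Lemma G_ext_continuous x : continuous G_ext x.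
Proof.
  apply (continuous_comp (fun y => Rmax (- tau) y) G); [apply continuous_Rmax_l|].
  apply G_continuous, Rmax_l.
Qed.

Lemma G_ext_nonneg x : 0 <= G_ext x.
Proof.
  destruct (state_pos (Rmax (- tau) x) (Rmax_l _ _)) as [PT [_ PV]].
  apply volterra_ge0, Rdiv_lt_0_compat; [now apply incid_pos | exact F2_pos].
Qed.

Lemma ex_RInt_G_ext u v : ex_RInt G_ext u v.
Proof. apply (@ex_RInt_continuous R_CompleteNormedModule). intros; apply G_ext_continuous. Qed.

Lemma J_derive t : is_derive J t (G_ext t - G_ext (t - tau)).
Proof.
  replace (G_ext t - G_ext (t - tau)) with (minus (scal 1 (G_ext t)) (scal 1 (G_ext (t - tau))))
    by (unfold minus, plus, opp, scal; simpl; unfold mult; simpl; ring).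
  apply (is_derive_RInt_bound_comp G_ext (fun u v => RInt G_ext u v) (fun t => t - tau) (fun t => t)).
  - apply filter_forall. intros; apply (@RInt_correct R_CompleteNormedModule), ex_RInt_G_ext.
  - apply G_ext_continuous.
  - apply G_ext_continuous.
  - auto_derive; [easy | ring].
  - auto_derive; easy.
Qed.

Lemma J_nonneg t : 0 <= J t.
Proof. apply RInt_ge_0; [lra | apply ex_RInt_G_ext | intros; apply G_ext_nonneg]. Qed.

Definition U t := T2 * volterra (T t / T2) + I2 * volterra (I t / I2)
  + weightV * (V2 * volterra (V t / V2)) + F2 * J t.

Definition dU t := dT t * (1 - T2 / T t) + dI t * (1 - I2 / I t)
  + weightV * (dV t * (1 - V2 / V t)) + F2 * (G t - G (t - tau)).

Definition Phi t := dissipation a Tmax b alpha T2 I2 V2 (T t) (I t) (V t).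

Lemma U_derive t : 0 < t -> is_derive U t (dU t).
Proof.
  intros Ht. destruct (state_pos t ltac:(lra)) as [PT [PI PV]].
  destruct (state_derive t Ht) as [DT [DI DV]].
  assert (HJ : is_derive J t (G t - G (t - tau))).
  { pose proof (J_derive t) as HJ. unfold G_ext in HJ.
    rewrite (Rmax_right (- tau) t), (Rmax_right (- tau) (t - tau)) in HJ by lra. exact HJ. }
  repeat apply (is_derive_plus (V := R_NormedModule)).
  - now apply is_derive_volterra_scaled.
  - now apply is_derive_volterra_scaled.
  - apply (is_derive_scal (fun t => V2 * volterra (V t / V2))). now apply is_derive_volterra_scaled.
  - now apply (is_derive_scal J).
Qed.

Lemma U_continuous t : 0 <= t -> continuous U t.
Proof.
  intros Ht. destruct (state_pos t ltac:(lra)) as [PT [PI PV]].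
  destruct (state_continuous t) as [HT [HI HV]].
  repeat apply continuous_Rplus.
  - now apply continuous_volterra_scaled.
  - now apply continuous_volterra_scaled.
  - apply (continuous_Rmult (fun _ => weightV)); [apply continuous_const|].
    now apply continuous_volterra_scaled.
  - apply (continuous_Rmult (fun _ => F2) J); [apply continuous_const|].
    apply (ex_derive_continuous (V := R_NormedModule) J). eexists. apply J_derive.
Qed.

Lemma dU_le t : 0 < t -> dU t <= - Phi t.
Proof.
  intros Ht. destruct (state_pos t ltac:(lra)) as [PT [PI PV]].
  destruct (state_pos (t - tau) ltac:(lra)) as [QT [QI QV]].
  apply lyapunov_derivative_le; auto.
Qed.

Lemma Phi_parts_nonneg t : -tau <= t ->
  0 <= a * (T t - T2 + I t - I2) ^ 2 / Tmax /\ 0 <= F2 * volterra (T2 / T t) /\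
  0 <= F2 * alpha * (V t - V2) ^ 2 / (V2 * (1 + alpha * V t) * (1 + alpha * V2)).
Proof.
  intros Ht. destruct (state_pos t Ht) as [PT [PI PV]]. now apply dissipation_parts_nonneg.
Qed.

Lemma U_decrease t1 t2 m : 0 <= t1 <= t2 -> (forall x, t1 < x < t2 -> m <= Phi x) ->
  U t2 <= U t1 - m * (t2 - t1).
Proof.
  intros Ht Hm.
  enough (U t2 - U t1 <= - m * (t2 - t1)) by lra.
  apply (sub_le_of_derive_le U dU); [lra | intros; apply U_continuous; lra | intros; apply U_derive; lra |].
  intros x Hx. pose proof (dU_le x ltac:(lra)). specialize (Hm x Hx). lra.
Qed.

Lemma U_nonincreasing t1 t2 : 0 <= t1 <= t2 -> U t2 <= U t1.
Proof.
  intros Ht. enough (U t2 <= U t1 - 0 * (t2 - t1)) by lra.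
  apply U_decrease; [exact Ht|]. intros x Hx.
  destruct (Phi_parts_nonneg x ltac:(lra)) as [A1 [A2 A3]]. unfold Phi, dissipation. fold F2. lra.
Qed.

Lemma U_ge_terms t : 0 <= t ->
  T2 * volterra (T t / T2) <= U t /\ I2 * volterra (I t / I2) <= U t /\
  weightV * V2 * volterra (V t / V2) <= U t /\ 0 <= U t.
Proof.
  intros Ht. destruct (state_pos t ltac:(lra)) as [PT [PI PV]].
  assert (Hnn : forall X Xs, 0 < Xs -> 0 < X -> 0 <= Xs * volterra (X / Xs)).
  { intros X Xs HXs HX. apply Rmult_le_pos; [lra|]. apply volterra_ge0, Rdiv_lt_0_compat; lra. }
  pose proof (Hnn _ _ hT2 PT). pose proof (Hnn _ _ hI2 PI). pose proof (Hnn _ _ hV2 PV).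
  assert (0 <= weightV * (V2 * volterra (V t / V2))) by (pose proof weightV_pos; nra).
  assert (0 <= F2 * J t) by (apply Rmult_le_pos; [left; exact F2_pos | apply J_nonneg]).
  unfold U. rewrite <- Rmult_assoc in *. repeat split; lra.
Qed.

Lemma solution_bounded : exists M, 0 < M /\ forall t, 0 <= t -> T t <= M /\ I t <= M /\ V t <= M.
Proof.
  pose proof weightV_pos.
  assert (HU0 : 0 <= U 0) by apply (U_ge_terms 0 ltac:(lra)).
  assert (0 <= U 0 / T2) by (apply Rdiv_le_0_compat; lra).
  set (MT := 2 * (U 0 / T2 + 1) * T2).
  set (MI := 2 * (U 0 / I2 + 1) * I2).
  set (MV := 2 * (U 0 / (weightV * V2) + 1) * V2).
  pose proof (Rmax_l MT (Rmax MI MV)). pose proof (Rmax_r MT (Rmax MI MV)).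
  pose proof (Rmax_l MI MV). pose proof (Rmax_r MI MV).
  exists (Rmax MT (Rmax MI MV)). split; [unfold MT in *; nra|].
  intros t Ht. destruct (state_pos t ltac:(lra)) as [PT [PI PV]].
  destruct (U_ge_terms t Ht) as [BT [BI [BV _]]].
  pose proof (U_nonincreasing 0 t ltac:(lra)).
  pose proof (le_of_scaled_volterra_le T2 T2 (T t) (U 0) hT2 hT2 PT ltac:(lra)) as HT.
  pose proof (le_of_scaled_volterra_le I2 I2 (I t) (U 0) hI2 hI2 PI ltac:(lra)) as HI.
  pose proof (le_of_scaled_volterra_le (weightV * V2) V2 (V t) (U 0) ltac:(nra) hV2 PV ltac:(lra)) as HV.
  fold MT in HT. fold MI in HI. fold MV in HV. repeat split; lra.
Qed.

Lemma derive_bounded : exists K, 0 < K /\ forall x, tau + 1 <= x ->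
  Rabs (dT x) <= K /\ Rabs (dI x) <= K /\ Rabs (dV x) <= K.
Proof.
  destruct solution_bounded as [M [HM Hbnd]].
  exists (s + (d + mu + p + c + b / alpha + a * (1 + 2 * M / Tmax)) * M).
  split; [assert (0 <= a * (1 + 2 * M / Tmax)) by (apply Rmult_le_pos; [lra|];
                  assert (0 <= M / Tmax) by (apply Rdiv_le_0_compat; lra); lra);
          assert (0 < b / alpha) by (apply Rdiv_lt_0_compat; lra); nra|].
  intros x Hx.
  destruct (state_pos x ltac:(lra)) as [PT [PI PV]]. destruct (Hbnd x ltac:(lra)) as [BT [BI BV]].
  destruct (state_pos (x - tau) ltac:(lra)) as [QT [QI QV]].
  destruct (Hbnd (x - tau) ltac:(lra)) as [CT [CI CV]].
  assert (Hinc : forall X Z, 0 < X <= M -> 0 < Z -> 0 <= incid b alpha X Z <= b / alpha * M).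
  { intros X Z HX HZ. split; [left; apply incid_pos; lra|].
    apply Rle_trans with (b * X / alpha); [apply incid_le; lra|].
    replace (b * X / alpha) with (b / alpha * X) by (field; lra).
    apply Rmult_le_compat_l; [left; apply Rdiv_lt_0_compat|]; lra. }
  pose proof (Hinc (T x) (V x) ltac:(lra) PV).
  pose proof (Hinc (T (x - tau)) (V (x - tau)) ltac:(lra) QV).
  pose proof (logist_term_bound a Tmax M (T x) (I x) (T x) ltac:(lra) hTmax
                ltac:(lra) ltac:(lra) ltac:(lra)) as LT.
  pose proof (logist_term_bound a Tmax M (T x) (I x) (I x) ltac:(lra) hTmax
                ltac:(lra) ltac:(lra) ltac:(lra)) as LI.
  apply Rabs_le_between in LT. apply Rabs_le_between in LI.
  assert (d * T x <= d * M) by (apply Rmult_le_compat_l; lra).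
  assert (mu * I x <= mu * M) by (apply Rmult_le_compat_l; lra).
  assert (p * I x <= p * M) by (apply Rmult_le_compat_l; lra).
  assert (c * V x <= c * M) by (apply Rmult_le_compat_l; lra).
  assert (0 < d * T x /\ 0 < mu * I x /\ 0 < p * I x /\ 0 < c * V x)
    by (repeat split; apply Rmult_lt_0_compat; lra).
  unfold dT, dI, dV. repeat split; apply Rabs_le; lra.
Qed.

Lemma is_lim_of_dissipation_bound (X dX : R -> R) Xs :
  (forall x, 0 < x -> is_derive X x (dX x)) ->
  (exists K, 0 < K /\ forall x, tau + 1 <= x -> Rabs (dX x) <= K) ->
  (forall e, 0 < e -> exists m, 0 < m /\ forall x, 0 <= x -> e <= Rabs (X x - Xs) -> m <= Phi x) ->
  is_lim X p_infty Xs.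
Proof.
  intros Hd [K [HK HbK]] Hfar.
  apply (is_lim_of_lyapunov U X Xs (tau + 1) K HK).
  - intros t Ht. apply (U_ge_terms t ltac:(lra)).
  - intros t1 t2 Ht. apply U_nonincreasing. lra.
  - apply (lipschitz_of_derive_bound X dX); [| intros; apply Hd; lra | exact HbK].
    intros x Hx. apply (ex_derive_continuous (V := R_NormedModule) X). eexists. apply Hd. lra.
  - intros e He. destruct (Hfar e He) as [m [Hm Hm']].
    exists m. split; [exact Hm|]. intros t1 t2 Ht Hx.
    apply U_decrease; [lra|]. intros x Hx'. apply Hm'; [lra | exact (Hx x Hx')].
Qed.

Lemma T_converges : is_lim T p_infty T2.
Proof.
  destruct derive_bounded as [K [HK HbK]]. destruct solution_bounded as [M [HM Hbnd]].
  apply (is_lim_of_dissipation_bound T dT); [apply state_derive | exists K; split; [exact HK|apply HbK] |].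
  intros e He.
  assert (Hrho : 0 < Rmin (e / M) (1 / 2) < 1).
  { pose proof (Rmin_r (e / M) (1 / 2)). split; [|lra].
    apply Rmin_glb_lt; [apply Rdiv_lt_0_compat|]; lra. }
  destruct (volterra_away_from_1 _ Hrho) as [m [Hm Hfar]].
  exists (F2 * m). split; [pose proof F2_pos; nra|]. intros x Hx Hex.
  destruct (Phi_parts_nonneg x ltac:(lra)) as [A1 [A2 A3]].
  destruct (state_pos x ltac:(lra)) as [PT [PI PV]]. destruct (Hbnd x Hx) as [BT _].
  (* [|T2 / T - 1| = |T - T2| / T >= e / M]. *)
  assert (m <= volterra (T2 / T x)).
  { apply Hfar; [apply Rdiv_lt_0_compat; lra|].
    replace (T2 / T x - 1) with ((T2 - T x) / T x) by (field; lra).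
    rewrite Rabs_div, (Rabs_right (T x)), Rabs_minus_sym by lra.
    apply Rle_trans with (e / M); [apply Rmin_l|].
    unfold Rdiv. apply Rmult_le_compat; [lra | left; apply Rinv_0_lt_compat; lra | lra |].
    apply Rinv_le_contravar; lra. }
  pose proof F2_pos. assert (F2 * m <= F2 * volterra (T2 / T x)) by (apply Rmult_le_compat_l; lra).
  unfold Phi, dissipation. fold F2. lra.
Qed.

Lemma T_plus_I_converges : is_lim (fun t => T t + I t) p_infty (T2 + I2).
Proof.
  destruct derive_bounded as [K [HK HbK]].
  apply (is_lim_of_dissipation_bound _ (fun x => dT x + dI x)).
  - intros x Hx. destruct (state_derive x Hx) as [DT [DI _]]. now apply (is_derive_plus T I).
  - exists (2 * K). split; [lra|]. intros x Hx. destruct (HbK x Hx) as [BT [BI _]].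
    pose proof (Rabs_triang (dT x) (dI x)). lra.
  - intros e He. exists (a * e ^ 2 / Tmax). split.
    { apply Rdiv_lt_0_compat; [apply Rmult_lt_0_compat, pow_lt|]; lra. }
    intros x Hx Hex. destruct (Phi_parts_nonneg x ltac:(lra)) as [A1 [A2 A3]].
    assert (e ^ 2 <= (T x - T2 + I x - I2) ^ 2).
    { replace (T x - T2 + I x - I2) with (T x + I x - (T2 + I2)) by ring.
      rewrite <- (pow2_abs (T x + I x - (T2 + I2))). apply pow_incr. lra. }
    assert (a * e ^ 2 / Tmax <= a * (T x - T2 + I x - I2) ^ 2 / Tmax).
    { unfold Rdiv. apply Rmult_le_compat_r; [left; apply Rinv_0_lt_compat; lra|].
      apply Rmult_le_compat_l; lra. }
    unfold Phi, dissipation. fold F2. lra.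
Qed.

Lemma I_converges : is_lim I p_infty I2.
Proof.
  apply (is_lim_ext (fun t => (T t + I t) - T t)); [intros; ring|].
  replace (Finite I2) with (Rbar_minus (T2 + I2) T2) by (simpl; f_equal; ring).
  apply (is_lim_minus _ _ _ (T2 + I2) T2); [exact T_plus_I_converges | exact T_converges |].
  reflexivity.
Qed.

Lemma V_converges : is_lim V p_infty V2.
Proof.
  destruct derive_bounded as [K [HK HbK]]. destruct solution_bounded as [M [HM Hbnd]].
  apply (is_lim_of_dissipation_bound V dV); [apply state_derive | exists K; split; [exact HK|apply HbK] |].
  intros e He. pose proof F2_pos.
  assert (0 < alpha * M) by nra. assert (0 < alpha * V2) by nra.
  set (den := V2 * (1 + alpha * M) * (1 + alpha * V2)).
  assert (Hden : 0 < den) by (apply Rmult_lt_0_compat; [apply Rmult_lt_0_compat|]; lra).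
  exists (F2 * alpha * e ^ 2 / den). split.
  { apply Rdiv_lt_0_compat; [apply Rmult_lt_0_compat; [nra | apply pow_lt; lra] | lra]. }
  intros x Hx Hex. destruct (Phi_parts_nonneg x ltac:(lra)) as [A1 [A2 A3]].
  destruct (state_pos x ltac:(lra)) as [PT [PI PV]]. destruct (Hbnd x Hx) as [_ [_ BV]].
  assert (e ^ 2 <= (V x - V2) ^ 2) by (rewrite <- (pow2_abs (V x - V2)); apply pow_incr; lra).
  assert (F2 * alpha * e ^ 2 / den <=
          F2 * alpha * (V x - V2) ^ 2 / (V2 * (1 + alpha * V x) * (1 + alpha * V2))).
  { assert (0 < F2 * alpha) by nra.
    unfold Rdiv. apply Rmult_le_compat;
      [apply Rmult_le_pos; [lra | apply pow2_ge_0] | left; apply Rinv_0_lt_compat; lra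
      | apply Rmult_le_compat_l; lra |].
    apply Rinv_le_contravar; [apply Rmult_lt_0_compat; [apply Rmult_lt_0_compat|]; nra|].
    unfold den. apply Rmult_le_compat_r; [lra|]. apply Rmult_le_compat_l; [lra|].
    assert (alpha * V x <= alpha * M) by (apply Rmult_le_compat_l; lra). lra. }
  unfold Phi, dissipation. fold F2. lra.
Qed.

Lemma U0_le rho : 0 < rho <= 1 / 2 ->
  (forall th, -tau <= th <= 0 ->
     Rabs (T th / T2 - 1) <= rho /\ Rabs (I th / I2 - 1) <= rho /\ Rabs (V th / V2 - 1) <= rho) ->
  U 0 <= rho ^ 2 * lyapunov_const.
Proof.
  intros Hrho Hclose.
  assert (Hnear : forall r, Rabs (r - 1) <= rho -> volterra r <= 36 * rho ^ 2).
  { intros r Hr. apply volterra_near_1; [exact Hrho|]. apply Rabs_le_between in Hr. split; nra. }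
  destruct (Hclose 0 ltac:(lra)) as [CT [CI CV]].
  assert (HJ : J 0 <= tau * (36 * rho ^ 2)).
  { unfold J. replace (0 - tau) with (- tau) by ring.
    apply Rle_trans with (RInt (fun _ => 36 * rho ^ 2) (- tau) 0).
    - apply RInt_le; [lra | apply ex_RInt_G_ext | apply ex_RInt_const |].
      intros x Hx. unfold G_ext, G. rewrite Rmax_right by lra.
      destruct (Hclose x ltac:(lra)) as [KT [_ KV]].
      apply volterra_near_1; [exact Hrho|]. apply incid_ratio_bounds; auto; lra.
    - rewrite RInt_const. unfold scal; simpl; unfold mult; simpl. lra. }
  pose proof weightV_pos. pose proof F2_pos.
  assert (T2 * volterra (T 0 / T2) <= T2 * (36 * rho ^ 2)) by (apply Rmult_le_compat_l; auto; lra).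
  assert (I2 * volterra (I 0 / I2) <= I2 * (36 * rho ^ 2)) by (apply Rmult_le_compat_l; auto; lra).
  assert (V2 * volterra (V 0 / V2) <= V2 * (36 * rho ^ 2)) by (apply Rmult_le_compat_l; auto; lra).
  assert (weightV * (V2 * volterra (V 0 / V2)) <= weightV * (V2 * (36 * rho ^ 2)))
    by (apply Rmult_le_compat_l; lra).
  assert (F2 * J 0 <= F2 * (tau * (36 * rho ^ 2))) by (apply Rmult_le_compat_l; lra).
  unfold U, lyapunov_const. lra.
Qed.

Lemma lyapunov_terms_small rho : 0 < rho <= 1 / 2 ->
  (forall th, -tau <= th <= 0 ->
     Rabs (T th / T2 - 1) <= rho /\ Rabs (I th / I2 - 1) <= rho /\ Rabs (V th / V2 - 1) <= rho) ->
  forall t, 0 <= t ->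
  T2 * volterra (T t / T2) <= rho ^ 2 * lyapunov_const /\
  I2 * volterra (I t / I2) <= rho ^ 2 * lyapunov_const /\
  weightV * V2 * volterra (V t / V2) <= rho ^ 2 * lyapunov_const.
Proof.
  intros Hrho Hclose t Ht.
  pose proof (U0_le rho Hrho Hclose). pose proof (U_nonincreasing 0 t ltac:(lra)).
  destruct (U_ge_terms t Ht) as [BT [BI [BV _]]]. repeat split; lra.
Qed.

End Solution.

Lemma equilibrium_stable : forall eps, 0 < eps -> exists delta, 0 < delta /\
  forall T I V : R -> R,
    is_solution s d a Tmax b alpha mu p c tau T I V ->
    positive_initial tau T I V ->
    (forall th, -tau <= th <= 0 ->
       Rabs (T th - T2) < delta /\ Rabs (I th - I2) < delta /\ Rabs (V th - V2) < delta) ->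
    forall t, 0 <= t ->
      Rabs (T t - T2) < eps /\ Rabs (I t - I2) < eps /\ Rabs (V t - V2) < eps.
Proof.
  intros eps Heps. pose proof weightV_pos.
  destruct (close_of_scaled_volterra_small T2 T2 eps hT2 hT2 Heps) as [etaT [HetaT CT]].
  destruct (close_of_scaled_volterra_small I2 I2 eps hI2 hI2 Heps) as [etaI [HetaI CI]].
  destruct (close_of_scaled_volterra_small (weightV * V2) V2 eps ltac:(nra) hV2 Heps)
    as [etaV [HetaV CV]].
  assert (Hconst : 0 <= lyapunov_const).
  { pose proof F2_pos. unfold lyapunov_const. nra. }
  destruct (exists_small_sqr_mul lyapunov_const (Rmin etaT (Rmin etaI etaV)) Hconst
              ltac:(repeat apply Rmin_glb_lt; assumption)) as [rho [Hrho Hsmall]].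
  pose proof (Rmin_l etaT (Rmin etaI etaV)). pose proof (Rmin_r etaT (Rmin etaI etaV)).
  pose proof (Rmin_l etaI etaV). pose proof (Rmin_r etaI etaV).
  pose proof (Rmin_l T2 (Rmin I2 V2)). pose proof (Rmin_r T2 (Rmin I2 V2)).
  pose proof (Rmin_l I2 V2). pose proof (Rmin_r I2 V2).
  assert (0 < Rmin T2 (Rmin I2 V2)) by (repeat apply Rmin_glb_lt; assumption).
  exists (rho * Rmin T2 (Rmin I2 V2)). split; [nra|].
  intros T I V Hsol Hinit Hclose t Ht.
  assert (Hrel : forall th, -tau <= th <= 0 ->
    Rabs (T th / T2 - 1) <= rho /\ Rabs (I th / I2 - 1) <= rho /\ Rabs (V th / V2 - 1) <= rho).
  { intros th Hth. destruct (Hclose th Hth) as [KT [KI KV]].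
    repeat split; apply rel_err_le; auto; nra. }
  destruct (lyapunov_terms_small T I V Hsol Hinit rho Hrho Hrel t Ht) as [ST [SI SV]].
  destruct (state_pos T I V Hsol Hinit t ltac:(lra)) as [PT [PI PV]].
  repeat split; [apply CT | apply CI | apply CV]; auto; lra.
Qed.

Lemma equilibrium_attractive : forall T I V : R -> R,
  is_solution s d a Tmax b alpha mu p c tau T I V ->
  positive_initial tau T I V ->
  is_lim T p_infty T2 /\ is_lim I p_infty I2 /\ is_lim V p_infty V2.
Proof.
  intros T I V Hsol Hinit.
  split; [|split];
    [exact (T_converges T I V Hsol Hinit) | exact (I_converges T I V Hsol Hinit)
    | exact (V_converges T I V Hsol Hinit)].
Qed.

End Lyapunov.

Theorem theorem4 (s d a Tmax b alpha mu p c tau : R)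
  (hs : 0 < s) (hd : 0 < d) (ha : 0 < a) (hTmax : 0 < Tmax) (hb : 0 < b)
  (halpha : 0 < alpha) (hmu : 0 < mu) (hp : 0 < p) (hc : 0 < c) (htau : 0 <= tau)
  (hR0 : basic_R0 s d a Tmax b mu p c > 1)
  (T2 I2 V2 : R) (hT2 : 0 < T2) (hI2 : 0 < I2) (hV2 : 0 < V2)
  (heq : is_equilibrium s d a Tmax b alpha mu p c T2 I2 V2)
  (hcond : a <= d + a / Tmax * (T2 + I2)) :
  GAS s d a Tmax b alpha mu p c tau T2 I2 V2.
Proof.
  (* [hR0] only guarantees that a positive equilibrium exists; here it is given. *)
  split; [apply equilibrium_stable | apply equilibrium_attractive]; assumption.
Qed.
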